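(* Let $N\ge1$, let $d_1,\dots,d_N$ be positive integers, and for each $l$ fix a basis $\{\mathbf{G}^{(l)}_i\}_{i=0}^{d_l^2-1}$ of the complex $d_l\times d_l$ matrices with $\mathbf{G}^{(l)}_0=\mathbf{I}_{d_l}$, $\mathrm{Tr}(\mathbf{G}^{(l)}_i)=0$ and $\mathrm{Tr}\big((\mathbf{G}^{(l)}_i)^\dagger\mathbf{G}^{(l)}_{i'}\big)=\kappa_l\delta_{ii'}$ for $i,i'\ge1$, where $\kappa_l\ge1$. For every quantum state $\rho$ on $\mathbb{C}^{d_1}\otimes\cdots\otimes\mathbb{C}^{d_N}$, its correlation tensor $\mathcal{T}^{(1\cdots N)}\in\mathbb{C}^{(d_1^2-1)\times\cdots\times(d_N^2-1)}$, with entries $t^{(1\cdots N)}_{i_1\cdots i_N}=\frac{d_1\cdots d_N}{\kappa_1\cdots\kappa_N}\mathrm{Tr}\big(\rho\,(\mathbf{G}^{(1)}_{i_1}\otimes\cdots\otimes\mathbf{G}^{(N)}_{i_N})\big)$ ($i_l\in\{1,\dots,d_l^2-1\}$), satisfies $\|\mathcal{T}^{(1\cdots N)}\|_F^2\le\mathfrak{m}^{(1\cdots N)}$, where, with $D=d_1\cdots d_N$, $K=\kappa_1\cdots\kappa_N$ and $d=\max_{l}d_l$, $$\mathfrak{m}^{(1\cdots N)}=\begin{cases}\frac{d_1^2-d_1}{\kappa_1}, & N=1,\\[2pt] \frac{D}{K}\Big(D+\frac{1}{N-1}-\frac{D}{N-1}\sum_{l=1}^N\frac{1}{d_l^2}\Big),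 & N=2,\ \text{or } N\ge3 \text{ and } \frac{D}{d^2}<1,\\[2pt] \frac{D}{K}\Big(D+\frac{2}{N-2}-\frac{D}{N-2}\sum_{l=1}^N\frac{1}{d_l^2}\Big), & N\ge3 \text{ and } \frac{D}{d^2}\ge1.\end{cases}$$
   Context: A quantum state is a positive semidefinite trace-one matrix. $\|\cdot\|_F$ is the Frobenius norm (square root of the sum of squared moduli of all entries). *)

From HB Require Import structures.
From mathcomp Require Import all_boot all_order all_algebra.
Set Implicit Arguments. Unset Strict Implicit. Unset Printing Implicit Defensive.
Import Order.TTheory GRing.Theory Num.Theory.
Local Open Scope ring_scope.

Definition adj (C : numClosedFieldType) m n (A : 'M[C]_(m, n)) : 'M[C]_(n, m) :=
  (map_mx Num.conj A)^T.

Definition psd (C : numClosedFieldType) n (A : 'M[C]_n) : Prop :=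
  adj A = A /\ forall v : 'cV[C]_n, 0 <= (adj v *m A *m v) 0 0.

Definition is_state (C : numClosedFieldType) n (A : 'M[C]_n) : Prop :=
  psd A /\ \tr A = 1.

(* Computational-basis index set of C^{d_1} (x) ... (x) C^{d_N}:
   tuples (x_1,...,x_N) with x_l < d_l. *)
Definition Idx (N : nat) (d : 'I_N -> nat) : finType :=
  {dffun forall l : 'I_N, 'I_(d l)}.

(* N-fold Kronecker product A_1 (x) ... (x) A_N, as a matrix on the
   tensor-product space, whose basis is indexed (via enum_val) by Idx d. *)
Definition ktens (C : numClosedFieldType) (N : nat) (d : 'I_N -> nat)
    (A : forall l : 'I_N, 'M[C]_(d l)) : 'M[C]_#|Idx d| :=
  \matrix_(a, b) \prod_(l < N)
     A l ((enum_val a : Idx d) l) ((enum_val b : Idx d) l).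

(* Index set of the correlation tensor: i_l in {1, ..., d_l^2 - 1},
   encoded as j_l : 'I_(d_l^2 - 1) with i_l = j_l + 1. *)
Definition TIdx (N : nat) (d : 'I_N -> nat) : finType :=
  {dffun forall l : 'I_N, 'I_((d l) ^ 2 - 1)}.

Lemma shift_idx_proof (n : nat) (j : 'I_(n ^ 2 - 1)) : (j.+1 < n ^ 2)%N.
Proof. have := ltn_ord j; rewrite ltn_subRL addnC addn1; exact. Qed.

Definition shift_idx (n : nat) (j : 'I_(n ^ 2 - 1)) : 'I_(n ^ 2) :=
  Ordinal (shift_idx_proof j).

Definition corr_tensor (C : numClosedFieldType) (N : nat) (d : 'I_N -> nat)
    (kappa : 'I_N -> C) (G : forall l : 'I_N, 'I_((d l) ^ 2) -> 'M[C]_(d l))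
    (rho : 'M[C]_#|Idx d|) (i : TIdx d) : C :=
  ((\prod_(l < N) (d l)%:R) / (\prod_(l < N) kappa l)) *
  \tr (rho *m ktens (fun l => G l (shift_idx (i l)))).

Definition corr_frob2 (C : numClosedFieldType) (N : nat) (d : 'I_N -> nat)
    (kappa : 'I_N -> C) (G : forall l : 'I_N, 'I_((d l) ^ 2) -> 'M[C]_(d l))
    (rho : 'M[C]_#|Idx d|) : C :=
  \sum_(i : TIdx d) `|corr_tensor kappa G rho i| ^+ 2.

Definition mbound (C : numClosedFieldType) (N : nat) (d : 'I_N -> nat)
    (kappa : 'I_N -> C) : C :=
  let D : C := (\prod_(l < N) d l)%N%:R in
  let K : C := \prod_(l < N) kappa l in
  let dmax : C := (\max_(l < N) d l)%N%:R in
  let S : C := \sum_(l < N) ((d l)%:R ^+ 2)^-1 in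
  if N == 1%N then
    (\sum_(l < N) (((d l)%:R ^+ 2 - (d l)%:R) / kappa l))
  else if (N == 2%N) || (D / dmax ^+ 2 < 1) then
    D / K * (D + (N.-1)%:R^-1 - D / (N.-1)%:R * S)
  else
    D / K * (D + 2 / (N - 2)%:R - D / (N - 2)%:R * S).

(* Expand rho in the product basis G^(1)_(i_1) (x) ... (x) G^(N)_(i_N), now with
   every index i_l in {0, ..., d_l^2 - 1}, and let c_i >= 0 be the squared
   coefficients normalised by the Hilbert-Schmidt norms of the basis elements.
   By the completeness relation of each orthogonal basis, a sum of c_i over the
   indices with prescribed zero pattern is a quadratic form in rho with product
   kernel: sum_i c_i = tr rho^2, c_0 = 1/D, and ||T||^2 = (D^2/K) A, where A is
   the total weight of the indices with no zero entry.
   For a pure state the two reduced states of the bipartition {l} | rest have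
   equal purity. This links X_l, the weight of the indices with i_l = 0, to the
   weight Y_l of the nonzero indices supported on {l}:
   X_l = 1/d_l^2 + (D/d_l^2) Y_l, so X_l >= 1/d_l^2, and X_l >= 1/d_l^2 + Y_l
   when d_l^2 <= D. Summing against c a pointwise inequality between the
   numbers of zero and nonzero entries of i then bounds A, which is the
   theorem for pure states; mixed states follow since ||T||^2 is convex in rho. *)

From HB Require Import structures.
From mathcomp Require Import all_boot all_order all_algebra.
From mathcomp Require Import spectral sesquilinear ring zify.
Set Implicit Arguments. Unset Strict Implicit. Unset Printing Implicit Defensive.
Import Order.TTheory GRing.Theory Num.Theory.
Local Open Scope ring_scope.

Lemma big_dffun_prod (R : comPzRingType) (I : finType) (T_ : I -> finType)
    (F : forall i, T_ i -> R) :
  \sum_(f : {dffun forall i, T_ i}) \prod_i F i (f i) = \prod_i \sum_(j : T_ i) F i j.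
Proof.
pose P_ := fun i => [ffun j : T_ i => F i j].
transitivity (\prod_i \sum_(j : T_ i) P_ i j); last first.
  by apply: eq_bigr => i _; apply: eq_bigr => j _; rewrite ffunE.
rewrite (eq_bigr (fun i => \sum_(j in tagged_with T_ i) untag 0 (P_ i) j)); last first.
  by move=> i _; exact: (big_tag (fun i => P_ i)).
rewrite bigA_distr_big_dep -(@big_fprod R 0 1 *%R +%R I T_ P_).
rewrite (reindex (@fprod_of_dffun _ T_)); last exact/onW_bij/fprod_of_dffun_bij.
apply: eq_bigr => f _; apply: eq_bigr => i _.
by rewrite /fprod_of_dffun fprodE ffunE.
Qed.

Section HilbertSchmidt.
Variable C : numClosedFieldType.

Lemma sum_mxvec_index n (F : 'I_(n * n) -> C) :
  \sum_k F k = \sum_x \sum_y F (mxvec_index x y).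
Proof.
rewrite pair_big /= (reindex (uncurry (@mxvec_index n n))) /=; last first.
  have [g g1 g2] := @curry_mxvec_bij n n.
  by exists g => k _; [apply: g1 | apply: g2].
by apply: eq_bigr => -[x y].
Qed.

Lemma mxtrace_adj_mul n (A B : 'M[C]_n) :
  \tr (adj A *m B) = \sum_x \sum_y (A x y)^* * B x y.
Proof.
rewrite /mxtrace exchange_big; apply: eq_bigr => x _ /=.
by rewrite mxE; apply: eq_bigr => y _; rewrite !mxE.
Qed.

(* The n^2 x n^2 coordinate matrix of the family is square, so the left
   inverse given by the orthogonality relations is also a right inverse. *)
Lemma mxtrace_orthogonal_completeness n (G : 'I_(n ^ 2) -> 'M[C]_n)
    (nu : 'I_(n ^ 2) -> C) :
  (forall j, nu j != 0) ->
  (forall j j', \tr (adj (G j) *m G j') = nu j * (j == j')%:R) ->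
  forall x y x' y' : 'I_n,
  \sum_j (nu j)^-1 * G j x y * (G j x' y')^* = ((x == x') && (y == y'))%:R.
Proof.
move=> nu_neq0 G_orth x y x' y'.
pose U : 'M[C]_(n * n) := \matrix_(j, k) mxvec (G j) 0 k.
pose V : 'M[C]_(n * n) := \matrix_(j, k) ((nu j)^-1 * (mxvec (G j) 0 k)^*).
have VU : V *m U^T = 1%:M.
  apply/matrixP => j j'; rewrite !mxE.
  transitivity ((nu j)^-1 * \tr (adj (G j) *m G j')).
    rewrite mxtrace_adj_mul sum_mxvec_index mulr_sumr; apply: eq_bigr => a _.
    rewrite mulr_sumr; apply: eq_bigr => b _.
    by rewrite !mxE !mxvecE mulrA.
  by rewrite G_orth mulrA mulVf ?mul1r.
have := congr1 (fun A : 'M[C]_(n * n) => A (mxvec_index x y) (mxvec_index x' y'))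
               (mulmx1C VU).
rewrite !mxE.
have -> : (mxvec_index x y == mxvec_index x' y') = (x == x') && (y == y').
  apply/eqP/andP => [|[/eqP-> /eqP->] //].
  by rewrite /mxvec_index => /cast_ord_inj/enum_rank_inj [-> ->].
move=> <-; apply: eq_bigr => j _.
by rewrite !mxE !mxvecE mulrCA mulrA.
Qed.

Lemma sqr_norm_avg_le (K : finType) (lam z : K -> C) :
  (forall k, 0 <= lam k) -> \sum_k lam k = 1 ->
  `|\sum_k lam k * z k| ^+ 2 <= \sum_k lam k * `|z k| ^+ 2.
Proof.
move=> lam_ge0 lam_sum1; set m := \sum_k lam k * z k.
have conj_m : \sum_k lam k * (z k)^* = m^*.
  rewrite /m rmorph_sum; apply: eq_bigr => k _.
  by rewrite rmorphM /= (conj_Creal (ger0_real (lam_ge0 k))).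
have variance : \sum_k lam k * ((z k - m) * (z k - m)^*) =
                \sum_k lam k * (z k * (z k)^*) - m * m^*.
  transitivity (\sum_k (lam k * (z k * (z k)^*) - lam k * z k * m^*
                        - m * (lam k * (z k)^*) + m * m^* * lam k)).
    by apply: eq_bigr => k _; rewrite rmorphB /=; ring.
  rewrite !big_split /= !sumrN -!mulr_suml -!mulr_sumr conj_m lam_sum1 -/m; ring.
have : 0 <= \sum_k lam k * ((z k - m) * (z k - m)^*).
  by apply: sumr_ge0 => k _; rewrite mulr_ge0 ?mul_conjC_ge0.
rewrite variance subr_ge0 normCK => mean_le.
by under eq_bigr do rewrite normCK.
Qed.

Definition pure_mx n (psi : 'I_n -> C) : 'M[C]_n := \matrix_(x, y) (psi x * (psi y)^*).

Section SpectralDecomposition.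
Local Open Scope sesquilinear_scope.

Lemma state_pure_decomposition n (rho : 'M[C]_n) : is_state rho ->
  exists (lam : 'I_n -> C) (psi : 'I_n -> 'I_n -> C),
  [/\ forall k, 0 <= lam k, \sum_k lam k = 1,
      forall k, \sum_x psi k x * (psi k x)^* = 1
    & rho = \sum_k lam k *: pure_mx (psi k)].
Proof.
case=> [[rho_herm rho_psd] rho_tr1].
have : rho \is normalmx.
  by apply/normalmxP; rewrite -map_trmx; move: rho_herm; rewrite /adj => ->.
move/orthomx_spectralP; set P := spectralmx rho; set D := spectral_diag rho.
have PP : P *m P ^t* = 1%:M := unitarymxP (spectral_unitarymx rho).
rewrite invmx_unitary ?spectral_unitarymx // => rhoE.
exists (fun k => D 0 k), (fun k x => (P k x)^*); split.
- move=> k; pose v : 'cV[C]_n := P ^t* *m delta_mx k 0.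
  have adj_v : adj v = delta_mx 0 k *m P.
    rewrite /v /adj map_mxM trmx_mul; congr (_ *m _); apply/matrixP => i j;
      rewrite !mxE; [by rewrite rmorph_nat andbC | exact: conjCK].
  have := rho_psd v; rewrite adj_v rhoE /v !mulmxA.
  rewrite -(mulmxA _ P (P ^t*)) PP mulmx1 -(mulmxA _ P (P ^t*)) PP mulmx1.
  by rewrite -rowE -colE !mxE eqxx mulr1n.
- by rewrite -rho_tr1 rhoE mxtrace_mulC mulmxA PP mul1mx mxtrace_diag.
- move=> k; have := congr1 (fun A : 'M[C]_n => A k k) PP; rewrite !mxE eqxx /=.
  by apply: etrans; apply: eq_bigr => x _; rewrite conjCK !mxE mulrC.
- apply/matrixP => x y; rewrite rhoE summxE !mxE; apply: eq_bigr => k _.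
  rewrite !mxE conjCK (bigD1 k) //= big1 ?addr0; last first.
    by move=> j /negbTE jk; rewrite !mxE jk mulr0n mulr0.
  by rewrite !mxE eqxx mulr1n; ring.
Qed.

End SpectralDecomposition.
End HilbertSchmidt.

Lemma sum_ord_shift (R : nmodType) m m' (h : 'I_m' -> 'I_m) (F : 'I_m -> R) :
  m = m'.+1 -> (forall j, val (h j) = (val j).+1) ->
  \sum_j F (h j) = \sum_(x | val x != 0%N) F x.
Proof.
move=> m_eq h_succ; subst m; rewrite [RHS]big_mkcond big_ord_recl /= add0r.
by apply: eq_bigr => j _; congr (F _); apply: val_inj; rewrite h_succ.
Qed.

Lemma le_scaled_bound (R : numFieldType) (D K q r S A : R) :
  0 < D -> 0 < K -> 0 < q -> q * A <= q + r / D - S ->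
  D ^+ 2 / K * A <= D / K * (D + r / q - D / q * S).
Proof.
move=> D_gt0 K_gt0 q_gt0 qA_le; rewrite -subr_ge0.
have -> : D / K * (D + r / q - D / q * S) - D ^+ 2 / K * A =
          D / K * (D / q) * (q + r / D - S - q * A).
  by field; rewrite !lt0r_neq0.
by apply: mulr_ge0; rewrite ?subr_ge0 // mulr_ge0 ?divr_ge0 ?ltW.
Qed.

Section ProductKernel.
Variables (C : numClosedFieldType) (N : nat) (d : 'I_N -> nat).

Definition entry (rho : 'M[C]_#|Idx d|) (a b : Idx d) : C :=
  rho (enum_rank a) (enum_rank b).

Lemma sum_enum_rank (F : 'I_#|Idx d| -> C) :
  \sum_x F x = \sum_(a : Idx d) F (enum_rank a).
Proof.
rewrite (reindex (@enum_rank (Idx d))) //.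
by exists (@enum_val _ (Idx d)) => x _; [apply: enum_rankK | apply: enum_valK].
Qed.

Lemma mxtrace_mul_ktens (rho : 'M[C]_#|Idx d|) (A : forall l, 'M[C]_(d l)) :
  \tr (rho *m ktens A) =
  \sum_(a : Idx d) \sum_(b : Idx d) entry rho a b * \prod_l A l (b l) (a l).
Proof.
rewrite /mxtrace sum_enum_rank; apply: eq_bigr => a _.
rewrite mxE sum_enum_rank; apply: eq_bigr => b _.
by rewrite /ktens mxE !enum_rankK.
Qed.

Definition kernel := forall l, 'I_(d l) -> 'I_(d l) -> 'I_(d l) -> 'I_(d l) -> C.

Definition kform (rho : 'M[C]_#|Idx d|) (k : kernel) : C :=
  \sum_(a : Idx d) \sum_(b : Idx d) \sum_(a' : Idx d) \sum_(b' : Idx d)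
    entry rho a b * (entry rho a' b')^* * \prod_l k l (a l) (b l) (a' l) (b' l).

Lemma eq_kform rho (k1 k2 : kernel) :
  (forall l a b a' b', k1 l a b a' b' = k2 l a b a' b') -> kform rho k1 = kform rho k2.
Proof.
move=> k12; rewrite /kform; apply: eq_bigr => a _; apply: eq_bigr => b _.
apply: eq_bigr => a' _; apply: eq_bigr => b' _; congr (_ * _).
by apply: eq_bigr => l _; rewrite k12.
Qed.

Lemma kformZ rho (s : 'I_N -> C) (k : kernel) :
  kform rho (fun l a b a' b' => s l * k l a b a' b') = (\prod_l s l) * kform rho k.
Proof.
rewrite /kform mulr_sumr; apply: eq_bigr => a _; rewrite mulr_sumr; apply: eq_bigr => b _.
rewrite mulr_sumr; apply: eq_bigr => a' _; rewrite mulr_sumr; apply: eq_bigr => b' _.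
by rewrite big_split /= mulrCA.
Qed.

Lemma sum_sqr_mxtrace_ktens rho (T_ : 'I_N -> finType)
    (g : forall l, T_ l -> 'M[C]_(d l)) (w : forall l, T_ l -> C) :
  \sum_(i : {dffun forall l, T_ l}) (\prod_l w l (i l)) *
     (\tr (rho *m ktens (fun l => g l (i l))) * (\tr (rho *m ktens (fun l => g l (i l))))^*)
  = kform rho (fun l a b a' b' => \sum_j w l j * g l j b a * (g l j b' a')^*).
Proof.
have mul_conj_sum2 (X Y : Idx d -> Idx d -> C) :
    (\sum_a \sum_b X a b) * (\sum_a \sum_b Y a b)^* =
    \sum_a \sum_b \sum_a' \sum_b' X a b * (Y a' b')^*.
  rewrite rmorph_sum big_distrl; apply: eq_bigr => a _.
  rewrite big_distrl; apply: eq_bigr => b _.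
  rewrite big_distrr; apply: eq_bigr => a' _.
  by rewrite rmorph_sum big_distrr.
under eq_bigr do rewrite !mxtrace_mul_ktens mul_conj_sum2.
do 4!(under eq_bigr do rewrite mulr_sumr; rewrite exchange_big; apply: eq_bigr => ? _).
rewrite -big_dffun_prod mulr_sumr; apply: eq_bigr => i _.
rewrite rmorphM rmorph_prod /= !big_split /=; ring.
Qed.

Definition kdelta n (a b a' b' : 'I_n) : C := ((a == a') && (b == b'))%:R.
Definition ktrace n (a b a' b' : 'I_n) : C := ((a == b) && (a' == b'))%:R.

Lemma prod_nat_bool (I : finType) (P : pred I) :
  \prod_i (P i)%:R = ([forall i, P i]%:R : C).
Proof.
have [/forallP P_all | /forallPn [i Pi_false]] := boolP [forall i, P i].
  by apply: big1 => i _; rewrite P_all.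
by rewrite (bigD1 i) //= (negbTE Pi_false) mul0r.
Qed.

Lemma dffun_eqE (a a' : Idx d) : [forall l, a l == a' l] = (a == a').
Proof. by apply/forallP/eqP => [eq_aa' | -> l //]; apply/ffunP => l; exact/eqP. Qed.

Lemma ktens1 : ktens (fun l => 1%:M) = 1%:M :> 'M[C]_#|Idx d|.
Proof.
apply/matrixP => x y; rewrite !mxE.
under eq_bigr do rewrite mxE.
by rewrite prod_nat_bool dffun_eqE (inj_eq enum_val_inj).
Qed.

Lemma kform_kdelta rho :
  kform rho (fun l => @kdelta (d l)) =
  \sum_(a : Idx d) \sum_(b : Idx d) entry rho a b * (entry rho a b)^*.
Proof.
have sum_delta (x0 : Idx d) (F : Idx d -> C) : \sum_x F x * (x0 == x)%:R = F x0.
  rewrite (bigD1 x0) //= eqxx mulr1 big1 ?addr0 // => x.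
  by rewrite eq_sym => /negbTE ->; rewrite mulr0.
apply: eq_bigr => a _; apply: eq_bigr => b _.
transitivity (\sum_a' (\sum_b' entry rho a b * (entry rho a' b')^* * (b == b')%:R)
                        * (a == a')%:R); last by rewrite !sum_delta.
apply: eq_bigr => a' _; rewrite mulr_suml; apply: eq_bigr => b' _.
under eq_bigr do rewrite /kdelta -mulnb natrM.
by rewrite big_split /= !prod_nat_bool !dffun_eqE; ring.
Qed.

Lemma kform_pure_kdelta (psi : 'I_#|Idx d| -> C) :
  \sum_x psi x * (psi x)^* = 1 -> kform (pure_mx psi) (fun l => @kdelta (d l)) = 1.
Proof.
rewrite sum_enum_rank => psi_unit; rewrite kform_kdelta.
rewrite -[1]mulr1 -{1}psi_unit -[in X in _ * X]psi_unit big_distrl /=.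
apply: eq_bigr => a _; rewrite big_distrr /=; apply: eq_bigr => b _.
by rewrite /entry !mxE rmorphM /= conjCK; ring.
Qed.

Lemma kform_pure_swap (psi : 'I_#|Idx d| -> C) (k : kernel) :
  kform (pure_mx psi) k = kform (pure_mx psi) (fun l a b a' b' => k l a a' b b').
Proof.
rewrite /kform; apply: eq_bigr => a _.
rewrite exchange_big /=; apply: eq_bigr => b _; apply: eq_bigr => a' _.
apply: eq_bigr => b' _; rewrite /entry !mxE !rmorphM /= conjCK.
by congr (_ * _); ring.
Qed.

(* [kform rho (ktr_at l)] is the squared Frobenius norm of the reduced state
   obtained by tracing out factor [l], and [kform rho (ktr_but l)] that of the
   reduced state on factor [l]. *)
Definition ktr_at l : kernel := fun j => if j == l then @ktrace (d j) else @kdelta (d j).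
Definition ktr_but l : kernel := fun j => if j == l then @kdelta (d j) else @ktrace (d j).

Lemma kform_pure_ktr_at (psi : 'I_#|Idx d| -> C) l :
  kform (pure_mx psi) (ktr_at l) = kform (pure_mx psi) (ktr_but l).
Proof.
rewrite kform_pure_swap; apply: eq_kform => j *.
by rewrite /ktr_at /ktr_but; case: (j == l).
Qed.

End ProductKernel.

Lemma corr_frob2_convex (C : numClosedFieldType) (N : nat) (d : 'I_N -> nat)
    (kappa : 'I_N -> C) (G : forall l : 'I_N, 'I_((d l) ^ 2) -> 'M[C]_(d l))
    (K : finType) (lam : K -> C) (rho_ : K -> 'M[C]_#|Idx d|) :
  (forall k, 0 <= lam k) -> \sum_k lam k = 1 ->
  corr_frob2 kappa G (\sum_k lam k *: rho_ k) <= \sum_k lam k * corr_frob2 kappa G (rho_ k).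
Proof.
move=> lam_ge0 lam_sum1; rewrite /corr_frob2.
under [X in _ <= X]eq_bigr do rewrite mulr_sumr.
rewrite exchange_big; apply: ler_sum => i _.
have -> : corr_tensor kappa G (\sum_k lam k *: rho_ k) i =
          \sum_k lam k * corr_tensor kappa G (rho_ k) i.
  rewrite /corr_tensor mulmx_suml raddf_sum mulr_sumr; apply: eq_bigr => k _.
  by rewrite -scalemxAl /= mxtraceZ mulrCA.
exact: sqr_norm_avg_le.
Qed.

Section BlochWeights.
(* Otherwise [l] would become implicit in [G], being inferable from [i]. *)
Local Unset Implicit Arguments.
Variables (C : numClosedFieldType) (N : nat) (d : 'I_N -> nat) (kappa : 'I_N -> C).
Variable G : forall l : 'I_N, 'I_((d l) ^ 2) -> 'M[C]_(d l).
Hypothesis d_gt0 : forall l, (0 < d l)%N.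
Hypothesis G0 : forall l (i : 'I_((d l) ^ 2)), val i = 0%N -> G l i = 1%:M.
Hypothesis G_tr : forall l (i : 'I_((d l) ^ 2)), (0 < val i)%N -> \tr (G l i) = 0.
Hypothesis G_orth : forall l (i i' : 'I_((d l) ^ 2)), (0 < val i)%N -> (0 < val i')%N ->
  \tr (adj (G l i) *m G l i') = kappa l * (i == i')%:R.
Hypothesis kappa_ge1 : forall l, 1 <= kappa l.

Lemma kappa_gt0 l : 0 < kappa l.
Proof. exact: lt_le_trans (kappa_ge1 l). Qed.

Lemma natr_d_gt0 l : 0 < (d l)%:R :> C.
Proof. by rewrite ltr0n. Qed.

Lemma sqr_d_gt0 l : (0 < d l ^ 2)%N.
Proof. by rewrite expn_gt0 d_gt0. Qed.

Definition nu l (j : 'I_(d l ^ 2)) : C := if val j == 0%N then (d l)%:R else kappa l.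

Lemma nu_gt0 l j : 0 < nu l j.
Proof. by rewrite /nu; case: ifP => _; [exact: natr_d_gt0 | exact: kappa_gt0]. Qed.

Lemma mxtrace_adj_G l j j' : \tr (adj (G l j) *m G l j') = nu l j * (j == j')%:R.
Proof.
have adj1 : adj (1%:M : 'M[C]_(d l)) = 1%:M by rewrite /adj map_mx1 trmx1.
rewrite /nu; case: (posnP j) => [j0 | j_gt0]; case: (posnP j') => [j'0 | j'_gt0].
- have -> : j == j' by apply/eqP/val_inj; rewrite /= j0 j'0.
  by rewrite !G0 // adj1 mul1mx mxtrace1 mulr1.
- have -> : (j == j') = false by apply/negbTE/eqP => jj'; rewrite -jj' j0 in j'_gt0.
  by rewrite G0 // adj1 mul1mx G_tr // mulr0.
- have -> : (j == j') = false by apply/negbTE/eqP => jj'; rewrite jj' j'0 in j_gt0.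
  rewrite (G0 l j') // mulmx1 /adj mxtrace_tr mulr0 -(conjC0 C) -(G_tr l j j_gt0).
  by rewrite /mxtrace rmorph_sum; apply: eq_bigr => x _; rewrite mxE.
- by rewrite G_orth // -lt0n j_gt0.
Qed.

Definition Gkernel l (w : pred 'I_(d l ^ 2)) (a b a' b' : 'I_(d l)) : C :=
  \sum_j (w j)%:R * (nu l j)^-1 * G l j b a * (G l j b' a')^*.

Lemma Gkernel_all l a b a' b' : Gkernel l predT a b a' b' = kdelta C a b a' b'.
Proof.
have nu_neq0 j : nu l j != 0 by rewrite lt0r_neq0 ?nu_gt0.
rewrite /kdelta andbC -(mxtrace_orthogonal_completeness nu_neq0 (@mxtrace_adj_G l)).
by apply: eq_bigr => j _; rewrite mul1r.
Qed.

Lemma Gkernel_id l a b a' b' :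
  Gkernel l (fun j => val j == 0%N) a b a' b' = (d l)%:R^-1 * ktrace C a b a' b'.
Proof.
rewrite /Gkernel (bigD1 (Ordinal (sqr_d_gt0 l))) //= big1 ?addr0; last first.
  move=> j j_neq0; have -> : (val j == 0%N) = false.
    by apply/negbTE; apply: contra j_neq0 => /eqP j0; apply/eqP/val_inj.
  by rewrite !mul0r.
rewrite /nu /= G0 // !mxE rmorph_nat mul1r /ktrace -mulrA -natrM mulnb.
by rewrite [b == a]eq_sym [b' == a']eq_sym.
Qed.

Lemma sum_shift_G l a b a' b' :
  \sum_(j : 'I_(d l ^ 2 - 1)) G l (shift_idx j) b a * (G l (shift_idx j) b' a')^* =
  kappa l * Gkernel l (fun j => val j != 0%N) a b a' b'.
Proof.
have sqr_d_eq : (d l ^ 2 = (d l ^ 2 - 1).+1)%N by rewrite subn1 prednK ?sqr_d_gt0.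
rewrite (sum_ord_shift (fun x => G l x b a * (G l x b' a')^*) sqr_d_eq) //.
rewrite /Gkernel mulr_sumr big_mkcond; apply: eq_bigr => x _.
rewrite /nu; case: (val x == 0%N) => /=; first by rewrite !mul0r mulr0.
by rewrite mul1r !mulrA mulfV ?mul1r // lt0r_neq0 ?kappa_gt0.
Qed.

Definition BIdx : finType := {dffun forall l : 'I_N, 'I_(d l ^ 2)}.

Definition bloch_coef (rho : 'M[C]_#|Idx d|) (i : BIdx) : C :=
  \tr (rho *m ktens (fun l => G l (i l))).

Definition bweight (rho : 'M[C]_#|Idx d|) (i : BIdx) : C :=
  (\prod_l (nu l (i l))^-1) * (bloch_coef rho i * (bloch_coef rho i)^*).

Definition bidx0 : BIdx := [ffun l => Ordinal (sqr_d_gt0 l)].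

Definition Dprod : C := \prod_l (d l)%:R.
Definition Kprod : C := \prod_l kappa l.

Lemma Dprod_gt0 : 0 < Dprod.
Proof. by apply: prodr_gt0 => l _; exact: natr_d_gt0. Qed.

Lemma Kprod_gt0 : 0 < Kprod.
Proof. by apply: prodr_gt0 => l _; exact: kappa_gt0. Qed.

Lemma bweight_ge0 rho i : 0 <= bweight rho i.
Proof.
rewrite /bweight mulr_ge0 ?mul_conjC_ge0 //; apply: prodr_ge0 => l _.
by rewrite invr_ge0 ltW ?nu_gt0.
Qed.

Lemma sum_bweight_sel rho (w : forall l, pred 'I_(d l ^ 2)) :
  \sum_(i : BIdx) [forall l, w l (i l)]%:R * bweight rho i =
  kform rho (fun l => Gkernel l (w l)).
Proof.
rewrite -(sum_sqr_mxtrace_ktens rho (T_ := fun l => 'I_(d l ^ 2)) G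
           (fun l j => (w l j)%:R * (nu l j)^-1)).
by apply: eq_bigr => i _; rewrite /bweight /bloch_coef big_split /= prod_nat_bool -mulrA.
Qed.

Lemma sum_bweight_pure psi :
  \sum_x psi x * (psi x)^* = 1 -> \sum_(i : BIdx) bweight (pure_mx psi) i = 1.
Proof.
move=> psi_unit; rewrite -(kform_pure_kdelta psi_unit).
transitivity (\sum_(i : BIdx) [forall l, predT (i l)]%:R * bweight (pure_mx psi) i).
  by apply: eq_bigr => i _; rewrite (_ : [forall l, _]) ?mul1r //; apply/forallP.
rewrite (sum_bweight_sel _ (fun l => predT)).
by apply: eq_kform => l *; rewrite Gkernel_all.
Qed.

Lemma bweight0 rho : \tr rho = 1 -> bweight rho bidx0 = Dprod^-1.
Proof.
move=> rho_tr1; rewrite /bweight /bloch_coef.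
have -> : ktens (fun l => G l (bidx0 l)) = ktens (fun l => 1%:M).
  apply/matrixP => x y; rewrite !mxE; apply: eq_bigr => l _.
  by rewrite ffunE G0.
rewrite ktens1 mulmx1 rho_tr1 rmorph1 !mulr1 /Dprod -prodfV.
by apply: eq_bigr => l _; rewrite ffunE.
Qed.

Lemma corr_frob2_bweight rho : corr_frob2 kappa G rho =
  Dprod ^+ 2 / Kprod * \sum_(i : BIdx) [forall l, val (i l) != 0%N]%:R * bweight rho i.
Proof.
have DK_ge0 : 0 <= Dprod / Kprod by rewrite divr_ge0 // ltW ?Dprod_gt0 ?Kprod_gt0.
rewrite /corr_frob2 /corr_tensor -/Dprod -/Kprod.
rewrite (sum_bweight_sel _ (fun l x => val x != 0%N)).
under eq_bigr do rewrite normrM exprMn (ger0_norm DK_ge0) normCK.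
rewrite -mulr_sumr.
transitivity ((Dprod / Kprod) ^+ 2 * kform rho (fun l a b a' b' =>
    \sum_(j : 'I_(d l ^ 2 - 1)) 1 * G l (shift_idx j) b a * (G l (shift_idx j) b' a')^*)).
  rewrite -sum_sqr_mxtrace_ktens; congr (_ * _); apply: eq_bigr => i _.
  by rewrite big1 ?mul1r.
have shiftE l a b a' b' :
    \sum_(j : 'I_(d l ^ 2 - 1)) 1 * G l (shift_idx j) b a * (G l (shift_idx j) b' a')^* =
    kappa l * Gkernel l (fun x => val x != 0%N) a b a' b'.
  by rewrite -sum_shift_G; apply: eq_bigr => j _; rewrite mul1r.
rewrite (eq_kform _ shiftE) kformZ -/Kprod; field; exact/lt0r_neq0/Kprod_gt0.
Qed.

Lemma sum_bweight_zero_at rho l :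
  \sum_(i : BIdx) (val (i l) == 0%N)%:R * bweight rho i =
  (d l)%:R^-1 * kform rho (@ktr_at C N d l).
Proof.
transitivity (\sum_(i : BIdx)
    [forall j, (j != l) || (val (i j) == 0%N)]%:R * bweight rho i).
  apply: eq_bigr => i _; congr ((nat_of_bool _)%:R * _).
  apply/idP/forallP => [i_l0 j | /(_ l)]; last by rewrite eqxx.
  by case: eqVneq => // ->.
have -> : (d l)%:R^-1 = \prod_j (if j == l then (d j)%:R^-1 else 1) :> C.
  by rewrite -big_mkcond big_pred1_eq.
rewrite (sum_bweight_sel _ (fun j x => (j != l) || (val x == 0%N))) -kformZ.
apply: eq_kform => j a b a' b'; rewrite /ktr_at.
case: eqVneq => [j_l | _] /=; first by subst j; rewrite -Gkernel_id; apply: eq_bigr.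
by rewrite mul1r -Gkernel_all; apply: eq_bigr.
Qed.

Lemma sum_bweight_supported_at rho l :
  \sum_(i : BIdx) [forall j, (j == l) || (val (i j) == 0%N)]%:R * bweight rho i =
  (\prod_(j | j != l) (d j)%:R^-1) * kform rho (@ktr_but C N d l).
Proof.
have -> : \prod_(j | j != l) (d j)%:R^-1 = \prod_j (if j == l then 1 else (d j)%:R^-1) :> C.
  by rewrite big_mkcond; apply: eq_bigr => j _; rewrite if_neg.
rewrite -kformZ (sum_bweight_sel _ (fun j x => (j == l) || (val x == 0%N))).
apply: eq_kform => j a b a' b'; rewrite /ktr_but.
case: eqVneq => [j_l | _] /=; last by rewrite -Gkernel_id; apply: eq_bigr.
by subst j; rewrite mul1r -Gkernel_all; apply: eq_bigr.
Qed.

Lemma purity_balance psi l :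
  (d l)%:R * \sum_(i : BIdx) (val (i l) == 0%N)%:R * bweight (pure_mx psi) i =
  Dprod / (d l)%:R *
    \sum_(i : BIdx) [forall j, (j == l) || (val (i j) == 0%N)]%:R * bweight (pure_mx psi) i.
Proof.
have d_neq0 j : (d j)%:R != 0 :> C by rewrite lt0r_neq0 ?natr_d_gt0.
rewrite sum_bweight_zero_at sum_bweight_supported_at kform_pure_ktr_at !mulrA mulfV //.
congr (_ * _); rewrite /Dprod (bigD1 l) //= [_ / _]mulrAC mulfV // mul1r -big_split.
by rewrite big1 // => j _; rewrite /= mulfV.
Qed.

Section WeightInequalities.
Variable c : BIdx -> C.
Hypothesis c_ge0 : forall i, 0 <= c i.
Hypothesis c_sum1 : \sum_(i : BIdx) c i = 1.
Hypothesis c0 : c bidx0 = Dprod^-1.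

Definition zeros (i : BIdx) : nat := \sum_l (val (i l) == 0%N).
Definition nonzeros (i : BIdx) : nat := \sum_l (val (i l) != 0%N).
Definition local_at (i : BIdx) l : bool :=
  (val (i l) != 0%N) && [forall j, (j == l) || (val (i j) == 0%N)].

Definition full_weight : C := \sum_(i : BIdx) [forall l, val (i l) != 0%N]%:R * c i.
Definition zero_at_weight l : C := \sum_(i : BIdx) (val (i l) == 0%N)%:R * c i.
Definition local_weight l : C := \sum_(i : BIdx) (local_at i l)%:R * c i.

Lemma zeros_nonzeros i : (zeros i + nonzeros i)%N = N.
Proof.
rewrite -big_split /= (eq_bigr (fun _ => 1%N)) => [|l _].
  by rewrite sum_nat_const card_ord muln1.
by case: (val (i l) == 0%N).
Qed.

Lemma zeros_eq0 i : (zeros i == 0%N) = [forall l, val (i l) != 0%N].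
Proof. by rewrite sum_nat_eq0; apply: eq_forallb => l; rewrite eqb0. Qed.

Lemma nonzeros_eq0 i : (nonzeros i == 0%N) = (i == bidx0).
Proof.
rewrite sum_nat_eq0; apply/forallP/eqP => [i_zero | -> l]; last by rewrite ffunE.
apply/ffunP => l; apply: val_inj; rewrite ffunE /=.
by move: (i_zero l); rewrite eqb0 negbK => /eqP.
Qed.

Lemma nonzeros_eq1 i : nonzeros i == 1%N -> (0 < \sum_l local_at i l)%N.
Proof.
move/sum_nat_eq1 => [l [_ i_l i_j]]; rewrite (bigD1 l) //= addn_gt0; apply/orP; left.
rewrite /local_at; move: i_l; case: (val (i l) != 0%N) => //= _.
rewrite lt0b; apply/forallP => j; case: eqVneq => //= j_neq_l.
by move: (i_j j j_neq_l isT); case: (val (i j) == 0%N).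
Qed.

Lemma sum_zero_at_weight : \sum_l zero_at_weight l = \sum_(i : BIdx) (zeros i)%:R * c i.
Proof.
rewrite exchange_big /=; apply: eq_bigr => i _.
by rewrite -mulr_suml /zeros natr_sum.
Qed.

Lemma sum_local_weight :
  \sum_l local_weight l = \sum_(i : BIdx) (\sum_l local_at i l)%:R * c i.
Proof.
rewrite exchange_big /=; apply: eq_bigr => i _.
by rewrite -mulr_suml natr_sum.
Qed.

Lemma DprodV_weight : Dprod^-1 = \sum_(i : BIdx) (nonzeros i == 0%N)%:R * c i.
Proof.
rewrite (bigD1 bidx0) //= nonzeros_eq0 eqxx mul1r big1 ?addr0 // => i.
by rewrite nonzeros_eq0 => /negbTE ->; rewrite mul0r.
Qed.

Lemma full_weightE : full_weight = \sum_(i : BIdx) (zeros i == 0%N)%:R * c i.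
Proof. by apply: eq_bigr => i _; rewrite zeros_eq0. Qed.

Lemma const_weight k : k%:R = \sum_(i : BIdx) k%:R * c i.
Proof. by rewrite -mulr_sumr c_sum1 mulr1. Qed.

Lemma local_weight_ge0 l : 0 <= local_weight l.
Proof. by apply: sumr_ge0 => i _; rewrite mulr_ge0. Qed.

(* Pointwise, zeros + (N-1) [zeros = 0] <= (N-1) + [nonzeros = 0]. *)
Lemma zero_at_full_weight_le : (1 <= N)%N ->
  \sum_l zero_at_weight l + (N - 1)%:R * full_weight <= (N - 1)%:R + Dprod^-1.
Proof.
move=> N_ge1; rewrite sum_zero_at_weight DprodV_weight full_weightE mulr_sumr.
rewrite [in X in _ <= X](const_weight (N - 1)) -!big_split /=; apply: ler_sum => i _.
rewrite mulrA -!mulrDl -!natrM -!natrD ler_wpM2r // ler_nat.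
have := zeros_nonzeros i; case: eqVneq; case: eqVneq => /=; lia.
Qed.

(* Pointwise, zeros + (N-2) [zeros = 0]
   <= (N-2) + 2 [nonzeros = 0] + [nonzeros = 1]. *)
Lemma zero_at_full_weight_le_local : (3 <= N)%N ->
  \sum_l zero_at_weight l + (N - 2)%:R * full_weight <=
  (N - 2)%:R + 2%:R * Dprod^-1 + \sum_l local_weight l.
Proof.
move=> N_ge3; rewrite sum_zero_at_weight sum_local_weight DprodV_weight full_weightE.
rewrite !mulr_sumr [in X in _ <= X](const_weight (N - 2)) -!big_split /=.
apply: ler_sum => i _; rewrite !mulrA -!mulrDl -!natrM -!natrD ler_wpM2r // ler_nat.
have := nonzeros_eq1 i; have := zeros_nonzeros i.
by case: eqVneq; case: eqVneq; case: eqVneq => /=; lia.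
Qed.

Hypothesis balance : forall l, (d l)%:R * zero_at_weight l =
  Dprod / (d l)%:R * \sum_(i : BIdx) [forall j, (j == l) || (val (i j) == 0%N)]%:R * c i.

Lemma zero_at_weightE l :
  zero_at_weight l = ((d l)%:R ^+ 2)^-1 + Dprod / (d l)%:R ^+ 2 * local_weight l.
Proof.
have supported_on_l : \sum_(i : BIdx) [forall j, (j == l) || (val (i j) == 0%N)]%:R * c i =
    c bidx0 + local_weight l.
  rewrite /local_weight (bigD1 bidx0) //= [X in _ = _ + X](bigD1 bidx0) //=.
  have local_at0 : local_at bidx0 l = false by rewrite /local_at /bidx0 ffunE eqxx.
  have supp0 : [forall j, (j == l) || (val (bidx0 j) == 0%N)].
    by apply/forallP => j; rewrite /bidx0 ffunE orbT.
  rewrite local_at0 supp0 mul0r add0r mul1r.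
  congr (_ + _); apply: eq_bigr => i i_neq0; congr ((nat_of_bool _)%:R * _).
  rewrite /local_at; case: (eqVneq (val (i l)) 0%N) => [i_l0 | _] //=; apply/negbTE.
  apply: contra i_neq0 => /forallP supp; rewrite -nonzeros_eq0 sum_nat_eq0.
  apply/forallP => j; case: (eqVneq j l) (supp j) => [-> _ | _ /= /eqP ->] //.
  by rewrite i_l0.
have d_neq0 : (d l)%:R != 0 :> C by rewrite lt0r_neq0 ?natr_d_gt0.
apply: (mulfI d_neq0); rewrite balance supported_on_l c0; field.
by rewrite d_neq0 lt0r_neq0 ?Dprod_gt0.
Qed.

Lemma zero_at_weight_ge l : ((d l)%:R ^+ 2)^-1 <= zero_at_weight l.
Proof.
rewrite zero_at_weightE lerDl mulr_ge0 ?local_weight_ge0 //.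
by rewrite divr_ge0 ?exprn_ge0 ?ler0n // ltW ?Dprod_gt0.
Qed.

Lemma zero_at_weight_ge_local l : (d l)%:R ^+ 2 <= Dprod ->
  ((d l)%:R ^+ 2)^-1 + local_weight l <= zero_at_weight l.
Proof.
move=> d2_le; rewrite zero_at_weightE lerD2l ler_peMl ?local_weight_ge0 //.
by rewrite ler_pdivlMr ?mul1r // exprn_gt0 ?natr_d_gt0.
Qed.

Lemma full_weight_le1 : (1 <= N)%N -> full_weight <= 1 - Dprod^-1.
Proof.
move=> N_ge1; rewrite lerBrDr DprodV_weight full_weightE -big_split /= -[X in _ <= X]c_sum1.
apply: ler_sum => i _; rewrite -mulrDl -natrD ler_piMl // lern1.
by have := zeros_nonzeros i; case: eqVneq; case: eqVneq => /=; lia.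
Qed.

Lemma full_weight_le2 : (1 <= N)%N ->
  (N - 1)%:R * full_weight <= (N - 1)%:R + Dprod^-1 - \sum_l ((d l)%:R ^+ 2)^-1.
Proof.
move=> N_ge1; rewrite lerBrDr; apply: le_trans (zero_at_full_weight_le N_ge1).
by rewrite addrC lerD2r; apply: ler_sum => l _; exact: zero_at_weight_ge.
Qed.

Lemma full_weight_le3 : (3 <= N)%N -> (forall l, (d l)%:R ^+ 2 <= Dprod) ->
  (N - 2)%:R * full_weight <= (N - 2)%:R + 2%:R * Dprod^-1 - \sum_l ((d l)%:R ^+ 2)^-1.
Proof.
move=> N_ge3 d2_le; rewrite lerBrDr -(lerD2r (\sum_l local_weight l)).
apply: le_trans (zero_at_full_weight_le_local N_ge3); rewrite -addrA addrC lerD2r.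
by rewrite -big_split; apply: ler_sum => l _; exact: zero_at_weight_ge_local.
Qed.

End WeightInequalities.

Lemma mbound_N1 : N = 1%N -> mbound d kappa = Dprod ^+ 2 / Kprod * (1 - Dprod^-1).
Proof.
move=> N1; have l0 : 'I_N by rewrite N1; exact: ord0.
have l_eq_l0 l : l = l0 by apply: ord_inj; have := ltn_ord l; have := ltn_ord l0; lia.
have sum_l0 (F : 'I_N -> C) : \sum_l F l = F l0.
  by rewrite (bigD1 l0) //= big_pred0 ?addr0 // => l; rewrite (l_eq_l0 l) eqxx.
have prod_l0 (F : 'I_N -> C) : \prod_l F l = F l0.
  by rewrite (bigD1 l0) //= big_pred0 ?mulr1 // => l; rewrite (l_eq_l0 l) eqxx.
rewrite /mbound /= (introT eqP N1) sum_l0 /Dprod /Kprod !prod_l0.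
by field; rewrite !lt0r_neq0 ?kappa_gt0 ?natr_d_gt0.
Qed.

Lemma sqr_d_le_Dprod : (1 <= N)%N ->
  ~~ (Dprod / ((\max_(l < N) d l)%N)%:R ^+ 2 < 1) -> forall l, (d l)%:R ^+ 2 <= Dprod.
Proof.
move=> N_ge1; set dmax := (\max_(l < N) d l)%N => D_ge l.
have dmax_gt0 : (0 < dmax)%N.
  exact: leq_trans (d_gt0 (Ordinal N_ge1)) (leq_bigmax (Ordinal N_ge1)).
rewrite ltr_pdivrMr ?exprn_gt0 ?ltr0n // mul1r -natrX /Dprod -natr_prod in D_ge.
rewrite ltr_nat -leqNgt in D_ge.
rewrite /Dprod -natrX -natr_prod ler_nat (leq_trans _ D_ge) // leq_exp2r //.
exact: leq_bigmax.
Qed.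

Lemma corr_frob2_pure_le psi : (1 <= N)%N -> \sum_x psi x * (psi x)^* = 1 ->
  corr_frob2 kappa G (pure_mx psi) <= mbound d kappa.
Proof.
move=> N_ge1 psi_unit; set c := bweight (pure_mx psi).
have c_ge0 : forall i, 0 <= c i := bweight_ge0 (pure_mx psi).
have c_sum1 : \sum_i c i = 1 := sum_bweight_pure psi psi_unit.
have c0 : c bidx0 = Dprod^-1.
  by apply: bweight0; rewrite -psi_unit; apply: eq_bigr => x _; rewrite mxE.
have balance := purity_balance psi.
have DK_ge0 : 0 <= Dprod ^+ 2 / Kprod.
  by rewrite divr_ge0 ?exprn_ge0 // ltW ?Dprod_gt0 ?Kprod_gt0.
rewrite corr_frob2_bweight -/(full_weight c).
have [N1 | /eqP N_neq1] := eqVneq N 1%N.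
  by rewrite mbound_N1 // ler_wpM2l // full_weight_le1.
rewrite /mbound /= (introF eqP N_neq1) natr_prod -/Dprod -/Kprod.
case: ifP => [_ | /negbT]; last rewrite negb_or => /andP[/eqP N_neq2 D_ge].
  rewrite -[X in Dprod + X]div1r -subn1.
  apply: le_scaled_bound; rewrite ?Dprod_gt0 ?Kprod_gt0 ?ltr0n ?div1r //.
  - lia.
  - exact: full_weight_le2.
apply: le_scaled_bound; rewrite ?Dprod_gt0 ?Kprod_gt0 ?ltr0n //; first lia.
apply: full_weight_le3 => //; [lia | exact: sqr_d_le_Dprod].
Qed.

End BlochWeights.

Theorem lemma2 (C : numClosedFieldType) (N : nat) (d : 'I_N -> nat)
    (kappa : 'I_N -> C)
    (G : forall l : 'I_N, 'I_((d l) ^ 2) -> 'M[C]_(d l))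
    (hN : (1 <= N)%N)
    (hd : forall l, (0 < d l)%N)
    (hbasis : forall l, basis_of fullv [seq G l i | i <- enum 'I_((d l) ^ 2)])
    (hG0 : forall l (i : 'I_((d l) ^ 2)), val i = 0%N -> G l i = 1%:M)
    (htr : forall l (i : 'I_((d l) ^ 2)), (0 < val i)%N -> \tr (G l i) = 0)
    (horth : forall l (i i' : 'I_((d l) ^ 2)), (0 < val i)%N -> (0 < val i')%N ->
        \tr (adj (G l i) *m G l i') = kappa l * (i == i')%:R)
    (hkappa : forall l, 1 <= kappa l)
    (rho : 'M[C]_#|Idx d|)
    (hrho : is_state rho) :
  corr_frob2 kappa G rho <= mbound d kappa.
Proof.
have [lam [psi [lam_ge0 lam_sum1 psi_unit ->]]] := state_pure_decomposition hrho.
apply: le_trans (corr_frob2_convex kappa G _ lam_ge0 lam_sum1) _.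
rewrite -[mbound d kappa]mul1r -lam_sum1 mulr_suml; apply: ler_sum => k _.
by rewrite ler_wpM2l // (@corr_frob2_pure_le _ _ _ _ _ hd hG0 htr horth hkappa _ hN).
Qed.
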